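(* Let $n=6k$ with $k\geq 2$ an integer, and let $\mathcal{T}_n$ be the latin square defined below. Then $\mathcal{T}_n$ has a transversal, and every suitable diagonal of $\mathcal{T}_n$ contains the $k$ entries $$(1,0,3),\ (2,1,4),\ \text{and}\ (3j+2,\ n-6j,\ n-3j+3)\ \text{for } j=1,\dots,k-2,$$ i.e. the entries $(1,0,3),(2,1,4),(5,n-6,0),(8,n-12,n-3),\ldots,(3k-4,12,3k+9)$ (all coordinates read modulo $n$).
   Context: Rows, columns and symbols are indexed by $\mathbb{Z}_n=\{0,1,\dots,n-1\}$; all arithmetic on symbols is modulo $n$, and congruence conditions on $a,b$ modulo $2$ or $3$ refer to the representatives in $\{0,\dots,n-1\}$. A latin square is viewed as its set of entries $(r,c,s)$ (symbol $s$ in row $r$, column $c$). For $n=6k$, $k\ge2$, the latin square $\mathcal{T}_n$ is defined by $\mathcal{T}_n[a,b]=$ $a+b+2$ if $(a,b)\in\{(0,2),(1,0)\}$; $a+b+1$ if $(a,b)\in\{(0,1),(2,1)\}$; $a+b-1$ if $(a,b)\in\{(1,1),(1,2),(2,2),(3,1)\}$; $a+b-2$ if $(a,b)=(3,0)$; $a+b+3$ if $b>1$, $b\equiv1\pmod 3$ and $a=0$; $a+b-3$ if $b>1$, $b\equiv 1\pmod 3$ and $a=3$; $a+b-2$ if $4\le a\le 3k-3$, $a\equiv0\pmod3$ and $b\equiv 0\pmod 2$; $a+b+2$ if $4\le a\le 3k-3$, $a\equiv1\pmod3$, $b\equiv0\pmod2$ and $b\ne n-2a+2$; $a+b+1$ if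 $4\le a\le 3k-3$, $a\equiv1\pmod3$ and $b\in\{n-2a+3,n-2a+2\}$; $a+b+1$ if $4\le a\le 3k-3$, $a\equiv 2\pmod3$ and $b=n-2a+4$; $a+b-1$ if $4\le a\le 3k-3$, $a\equiv2\pmod 3$ and $b=n-2a+5$; $a+b$ otherwise. A transversal is a set of $n$ entries containing each row, column and symbol exactly once. For an entry $(r,c,s)$, $\Delta(r,c,s)$ is the unique integer with $\Delta(r,c,s)\equiv s-r-c\pmod n$ and $-n/2<\Delta(r,c,s)\le n/2$. A suitable diagonal is a set of $n$ entries, no two sharing a row or a column, whose $\Delta$-values sum to something congruent to $n/2$ modulo $n$. *)

From mathcomp Require Import all_boot all_order all_algebra.
Set Implicit Arguments. Unset Strict Implicit. Unset Printing Implicit Defensive.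
Import Order.TTheory GRing.Theory Num.Theory.
From mathcomp Require Import ssrint intdiv.
Local Open Scope ring_scope.
Local Open Scope nat_scope.

Definition entry (k : nat) : finType := ('I_(6*k) * 'I_(6*k) * 'I_(6*k))%type.

(* The offset T_n[a,b] - (a+b), following the case list in order
   (first matching case applies, last case "otherwise" gives 0). *)
Definition Toff (k a b : nat) : int :=
  let n := 6 * k in
  let mid := (4 <= a) && (a <= 3 * k - 3) in
  if ((a == 0) && (b == 2)) || ((a == 1) && (b == 0)) then 2%:Z
  else if ((a == 0) && (b == 1)) || ((a == 2) && (b == 1)) then 1%:Z
  else if [|| (a == 1) && (b == 1), (a == 1) && (b == 2),
              (a == 2) && (b == 2) | (a == 3) && (b == 1)] then (-1)%R
  else if (a == 3) && (b == 0) then (-2)%R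
  else if [&& 1 < b, b %% 3 == 1 & a == 0] then 3%:Z
  else if [&& 1 < b, b %% 3 == 1 & a == 3] then (-3)%R
  else if [&& mid, a %% 3 == 0 & ~~ odd b] then (-2)%R
  else if [&& mid, a %% 3 == 1, ~~ odd b & b != n - 2 * a + 2] then 2%:Z
  else if [&& mid, a %% 3 == 1 & (b == n - 2 * a + 3) || (b == n - 2 * a + 2)] then 1%:Z
  else if [&& mid, a %% 3 == 2 & b == n - 2 * a + 4] then 1%:Z
  else if [&& mid, a %% 3 == 2 & b == n - 2 * a + 5] then (-1)%R
  else 0%:Z.

Definition Tval (k a b : nat) : nat :=
  `|(((a + b)%:Z + Toff k a b) %% (6 * k)%:Z)%Z|%N.

(* The latin square T_n as its set of entries (r, c, s). *)
Definition Tsq (k : nat) : {set entry k} :=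
  [set e : entry k | nat_of_ord e.2 == Tval k e.1.1 e.1.2].

Definition latin_transversal (k : nat) (X : {set entry k}) : Prop :=
  [/\ X \subset Tsq k, #|X| = 6 * k,
      forall r : 'I_(6*k), #|[set e in X | e.1.1 == r]| = 1,
      forall c : 'I_(6*k), #|[set e in X | e.1.2 == c]| = 1 &
      forall s : 'I_(6*k), #|[set e in X | e.2 == s]| = 1].

(* Delta(r,c,s): the representative of s-r-c mod n in (-n/2, n/2]. *)
Definition Delta (k : nat) (e : entry k) : int :=
  let n := 6 * k in
  let m := (nat_of_ord e.2 + 2 * n - e.1.1 - e.1.2) %% n in
  if m <= n./2 then m%:Z else (m%:Z - n%:Z)%R.

Definition suitable_diagonal (k : nat) (D : {set entry k}) : Prop :=
  [/\ D \subset Tsq k, #|D| = 6 * k,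
      {in D &, forall e f : entry k, e != f ->
          (e.1.1 != f.1.1) && (e.1.2 != f.1.2)} &
      ((\sum_(e in D) Delta e)%R = (6 * k)./2 %[mod (6 * k)%:Z])%Z].

Definition has_entry (k : nat) (D : {set entry k}) (r c s : nat) : bool :=
  [exists e in D, [&& nat_of_ord e.1.1 == r %% (6 * k),
                      nat_of_ord e.1.2 == c %% (6 * k) &
                      nat_of_ord e.2 == s %% (6 * k)]].

From mathcomp Require Import all_boot all_order all_algebra zify.
Import GRing.Theory Num.Theory.
Local Open Scope nat_scope.

(* Every offset Toff lies in [-3, 3], so it is the Delta of its entry as soon as n >= 12.
   In row a the offset ranges over [-min_off a, max_off a], and these bounds add up over
   all rows to -(3k - 1) and 3k = n/2.  The Delta-sum of a suitable diagonal is therefore an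
   integer in (-n/2, n/2] congruent to n/2 modulo n, i.e. n/2 itself, which forces every
   entry of the diagonal to realise the maximal offset of its row.  In rows 1, 2 and 3j + 2
   that maximum occurs in a single column.  A transversal is obtained by picking a
   maximal-offset entry in every row along the column permutation tcol; the symbols of
   these entries turn out to be distinct as well. *)

Lemma eqz_mod_near (n : nat) (x y : int) :
  (`|x - y| < n%:Z)%R -> (x == y %[mod n])%Z -> x = y.
Proof.
rewrite eqz_mod_dvd => lt_xy /dvdzP [q def_q].
move: lt_xy; rewrite def_q normrM; case: (q =P 0%R) => [q0 _ | /eqP q_neq0].
  by apply/eqP; rewrite -subr_eq0 def_q q0 mul0r.
have : (0 < `|q|)%R by rewrite normr_gt0.
nia.
Qed.

Lemma centered_mod_eq (n r c : nat) (t : int) : r < n -> c < n -> ~~ odd n ->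
  (- Posz n./2 < t <= Posz n./2)%R ->
  let m := (`|((Posz (r + c) + t) %% n)%Z|%N + 2 * n - r - c) %% n in
  (if m <= n./2 then Posz m else (Posz m - Posz n)%R) = t.
Proof.
move=> lt_rn lt_cn even_n t_win m.
have lt_mn : m < n by rewrite ltn_mod; lia.
have m_mod : (Posz m == t %[mod n])%Z.
  rewrite /m -modz_nat; set s := `|_|%N.
  have def_s : Posz s = ((Posz (r + c) + t) %% n)%Z.
    by rewrite /s gez0_abs // modz_ge0 //; lia.
  have -> : Posz (s + 2 * n - r - c) = (Posz s + (2%:Z * Posz n - Posz (r + c)))%R by lia.
  rewrite def_s modzDml.
  have -> : (Posz (r + c) + t + (2%:Z * n - Posz (r + c)) = 2%:Z * n + t)%R by lia.
  by rewrite modzMDl modz_mod.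
clearbody m; apply: (@eqz_mod_near n); first by case: ifP => m_half; lia.
case: ifP => _ //.
have -> : (Posz m - Posz n = -1 * Posz n + Posz m)%R by lia.
by rewrite modzMDl.
Qed.

Lemma sum_blocks3 (F : nat -> nat) (m p c : nat) :
  (forall j, j < p -> F (m + 3 * j) + F (m + 3 * j).+1 + F (m + 3 * j).+2 = c) ->
  \sum_(m <= i < m + 3 * p) F i = c * p.
Proof.
elim: p => [|p IHp] blocks; first by rewrite big_geq ?muln0 // addn0.
rewrite (big_cat_nat _ (n := m + 3 * p)) ?IHp //=; try lia; last first.
  by move=> j lt_jp; apply: blocks; lia.
have -> : m + 3 * p.+1 = (m + 3 * p).+3 by lia.
rewrite 3?big_ltn ?big_geq ?addn0; try lia.
by rewrite mulnS; have := blocks p (ltnSn p); lia.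
Qed.

Lemma card_fiber_imset (I T : finType) (f : I -> T) (p : T -> I) :
  injective (p \o f) -> forall i, #|[set x in f @: setT | p x == i]| = 1.
Proof.
move=> pf_inj i; have [g pfK gK] := injF_bij pf_inj.
rewrite (_ : [set x in _ | _] = [set f (g i)]) ?cards1 //.
apply/setP => x; rewrite !inE; apply/andP/eqP => [[/imsetP [j _ ->] /eqP <-] | ->].
  by rewrite -[j in LHS]pfK.
by split; [apply: imset_f | rewrite -[p _]/((p \o f) _) gK].
Qed.

Ltac decide_ifs := repeat (match goal with |- context [if ?b then _ else _] =>
  first [ rewrite (_ : b = true); [|lia] | rewrite (_ : b = false); [|lia] | case: ifP => ? ]
  end; cbv beta iota).

Section SquareT.
Variables (k : nat) (k_ge2 : 2 <= k).

Definition max_off (a : nat) : nat :=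
  if a == 0 then 3 else if a == 1 then 2 else if a == 2 then 1 else if a == 3 then 0
  else if a <= 3*k-3 then (if a %% 3 == 1 then 2 else if a %% 3 == 2 then 1 else 0) else 0.

Definition min_off (a : nat) : nat :=
  if a == 0 then 0 else if a == 1 then 1 else if a == 2 then 1 else if a == 3 then 3
  else if a <= 3*k-3 then (if a %% 3 == 0 then 2 else if a %% 3 == 2 then 1 else 0) else 0.

Lemma Toff_bounds a b : (- Posz (min_off a) <= Toff k a b <= Posz (max_off a))%R.
Proof.
by rewrite /max_off /min_off; repeat case: ifP => ?; rewrite /Toff /=; decide_ifs; lia.
Qed.

Lemma Toff_small a b : (-3 <= Toff k a b <= 3)%R.
Proof. by rewrite /Toff /=; repeat case: ifP => ?; lia. Qed.

Lemma Delta_Tsq (e : entry k) : e \in Tsq k -> Delta e = Toff k e.1.1 e.1.2.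
Proof.
rewrite inE => /eqP Te; rewrite /Delta Te /Tval.
have small := Toff_small e.1.1 e.1.2.
by apply: centered_mod_eq; rewrite ?ltn_ord //; lia.
Qed.

Lemma sum_rows_low (F : nat -> nat) : (forall r, 3*k-3 < r -> F r = 0) ->
  \sum_(r < 6*k) F r = F 0 + F 1 + F 2 + F 3 + \sum_(4 <= r < 4 + 3*(k-2)) F r.
Proof.
move=> F_high; rewrite -(big_mkord xpredT F) (big_cat_nat _ (n := 4 + 3*(k-2))) //=; try lia.
have -> : \sum_(4 + 3*(k-2) <= r < 6*k) F r = 0.
  by rewrite big_nat_cond big1 // => r /andP [/andP [lt_r _] _]; apply: F_high; lia.
rewrite addn0 (big_cat_nat _ (n := 4)) //=; try lia.
by have -> : \sum_(0 <= r < 4) F r = F 0 + F 1 + F 2 + F 3 by rewrite !big_nat_recr //= big_geq.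
Qed.

Lemma sum_max_off : \sum_(r < 6*k) max_off r = 3*k.
Proof.
rewrite sum_rows_low ?(@sum_blocks3 _ _ _ 3).
- by rewrite /max_off /=; lia.
- by move=> j lt_j; rewrite /max_off; decide_ifs.
- by move=> r lt_r; rewrite /max_off; decide_ifs.
Qed.

Lemma sum_min_off : \sum_(r < 6*k) min_off r = 3*k - 1.
Proof.
rewrite sum_rows_low ?(@sum_blocks3 _ _ _ 3).
- by rewrite /min_off /=; lia.
- by move=> j lt_j; rewrite /min_off; decide_ifs.
- by move=> r lt_r; rewrite /min_off; decide_ifs.
Qed.

Definition single_max_row (a : nat) : bool :=
  (a == 1) || (a == 2) || (4 <= a <= 3*k-3) && (a %% 3 == 2).

Definition max_col (a : nat) : nat :=
  if a == 1 then 0 else if a == 2 then 1 else 6*k - 2*a + 4.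

Lemma Toff_eq_max_off a (b : 'I_(6*k)) : single_max_row a ->
  Toff k a b = Posz (max_off a) -> nat_of_ord b = max_col a.
Proof.
have lt_b := ltn_ord b; move=> /orP [/orP [] /eqP -> | /andP [a_mid a_mod]].
- by rewrite /max_off /max_col /Toff /=; decide_ifs; lia.
- by rewrite /max_off /max_col /Toff /=; decide_ifs; lia.
- by rewrite /max_off /max_col; decide_ifs; rewrite /Toff /=; decide_ifs; lia.
Qed.

Section Transversal.

Definition tcol (a : nat) : nat :=
  if a == 0 then 4 else if a == 1 then 0 else if a == 2 then 1 else if a == 3 then 2
  else if a <= 3*k-3 then (if a %% 3 == 0 then 6*k - 2*a + 7 else 6*k - 2*a + 4)
  else if a == 3*k-2 then 6 else if a == 3*k-1 then 9 else if a == 3*k then 7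
  else if a == 3*k+1 then 5 else if a == 3*k+2 then 3
  else if a <= 6*k-4 then (if a %% 3 == 2 then 2*(6*k-a)+8 else 2*(6*k-a)+5)
  else if a == 6*k-3 then 11 else if a == 6*k-2 then 8 else 10.

Definition tcol_inv (c : nat) : nat :=
  if c == 0 then 1 else if c == 1 then 2 else if c == 2 then 3 else if c == 3 then 3*k+2
  else if c == 4 then 0 else if c == 5 then 3*k+1 else if c == 6 then 3*k-2
  else if c == 7 then 3*k else if c == 8 then 6*k-2 else if c == 9 then 3*k-1
  else if c == 10 then 6*k-1 else if c == 11 then 6*k-3
  else if (c %% 6 == 0) || (c %% 6 == 2) then (6*k - c + 4) %/ 2
  else if c %% 6 == 1 then (6*k-c+7) %/ 2
  else if c %% 6 == 4 then 6*k - (c-8) %/ 2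
  else 6*k - (c-5) %/ 2.

(* The symbol a + tcol a + max_off a chosen in row a, taken in [3, n + 3) rather than in
   [0, n) so that it is piecewise affine in a. *)
Definition tsym (a : nat) : nat :=
  if a == 0 then 7 else if a == 1 then 3 else if a == 2 then 4 else if a == 3 then 5
  else if a <= 3*k-3 then
    (if a %% 3 == 0 then 6*k-a+7 else if a %% 3 == 1 then 6*k-a+6 else 6*k-a+5)
  else if a == 3*k-2 then 3*k+4 else if a == 3*k-1 then 3*k+8 else if a == 3*k then 3*k+7
  else if a == 3*k+1 then 3*k+6 else if a == 3*k+2 then 3*k+5
  else if a <= 6*k-4 then (if a %% 3 == 2 then 6*k-a+8 else 6*k-a+5)
  else if a == 6*k-3 then 8 else if a == 6*k-2 then 6 else 9.

Definition tsym_inv (s : nat) : nat :=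
  if s == 3 then 1 else if s == 4 then 2 else if s == 5 then 3 else if s == 6 then 6*k-2
  else if s == 7 then 0 else if s == 8 then 6*k-3 else if s == 9 then 6*k-1
  else if s <= 3*k+3 then (if s %% 3 == 0 then 6*k+8-s else 6*k+5-s)
  else if s == 3*k+4 then 3*k-2 else if s == 3*k+5 then 3*k+2 else if s == 3*k+6 then 3*k+1
  else if s == 3*k+7 then 3*k else if s == 3*k+8 then 3*k-1
  else if s %% 3 == 2 then 6*k+6-s else if s %% 3 == 0 then 6*k+5-s else 6*k+7-s.

Variable a : 'I_(6*k).

Lemma tcol_lt : tcol a < 6*k.
Proof. by have lt_a := ltn_ord a; rewrite /tcol; repeat case: ifP => ?; lia. Qed.

Lemma tcolK : tcol_inv (tcol a) = a.
Proof.
have lt_a := ltn_ord a.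
by rewrite /tcol; repeat case: ifP => ?; rewrite /tcol_inv /=; decide_ifs; lia.
Qed.

Lemma tsym_bounds : 3 <= tsym a < 6*k + 3.
Proof. by have lt_a := ltn_ord a; rewrite /tsym; repeat case: ifP => ?; lia. Qed.

Lemma tsymK : tsym_inv (tsym a) = a.
Proof.
have lt_a := ltn_ord a.
by rewrite /tsym; repeat case: ifP => ?; rewrite /tsym_inv /=; decide_ifs; lia.
Qed.

Lemma Toff_tcol : Toff k a (tcol a) = Posz (max_off a).
Proof.
have lt_a := ltn_ord a.
by rewrite /tcol; repeat case: ifP => ?; rewrite /Toff /max_off /=; decide_ifs; lia.
Qed.

Lemma tcol_tsym : a + tcol a + max_off a = tsym a \/ a + tcol a + max_off a = tsym a + 6*k.
Proof.
have lt_a := ltn_ord a.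
by rewrite /tcol; repeat case: ifP => ?; rewrite /tsym /max_off; decide_ifs; lia.
Qed.

End Transversal.

Let n_gt0 : 0 < 6*k. Proof. lia. Qed.

Definition tcol_ord (a : 'I_(6*k)) : 'I_(6*k) := Ordinal (tcol_lt a).
Definition tsym_ord (a : 'I_(6*k)) : 'I_(6*k) := Ordinal (ltn_pmod (tsym a) n_gt0).
Definition tentry (a : 'I_(6*k)) : entry k := (a, tcol_ord a, tsym_ord a).

Lemma tcol_ord_inj : injective tcol_ord.
Proof.
move=> a a' /(congr1 val) /= eq_col; apply: val_inj.
by rewrite /= -(tcolK a) eq_col tcolK.
Qed.

Lemma tsym_ord_inj : injective tsym_ord.
Proof.
move=> a a' /(congr1 val) /= eq_mod; apply: val_inj => /=.
have bnd := tsym_bounds a; have bnd' := tsym_bounds a'.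
have [eq_tsym] : Posz (tsym a) = Posz (tsym a').
  by apply: (@eqz_mod_near (6*k)); [lia | rewrite !modz_nat eq_mod].
by rewrite -(tsymK a) eq_tsym tsymK.
Qed.

Lemma tentry_Tsq a : tentry a \in Tsq k.
Proof.
rewrite inE /= /Tval Toff_tcol -PoszD modz_nat absz_nat.
by case: (tcol_tsym a) => ->; rewrite ?modnDr.
Qed.

Lemma transversal_exists : exists X : {set entry k}, latin_transversal X.
Proof.
exists (tentry @: setT); split.
- by apply/subsetP => e /imsetP [a _ ->]; apply: tentry_Tsq.
- rewrite card_imset ?cardsT ?card_ord //.
  by move=> a a' /(congr1 (fun e : entry k => e.1.1)).
- exact: (@card_fiber_imset _ _ tentry (fun e => e.1.1)).
- exact: (@card_fiber_imset _ _ tentry (fun e => e.1.2) tcol_ord_inj).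
- exact: (@card_fiber_imset _ _ tentry (fun e => e.2) tsym_ord_inj).
Qed.

Section SuitableDiagonal.
Variables (D : {set entry k}) (D_suitable : suitable_diagonal D).

Lemma row_inj : {in D &, injective (fun e : entry k => e.1.1)}.
Proof.
case: D_suitable => _ _ D_lines _ e f De Df eq_row; case: (eqVneq e f) => // ne_ef.
by move: (D_lines e f De Df ne_ef); rewrite eq_row eqxx.
Qed.

Lemma rows_setT : [set e.1.1 | e in D] = setT.
Proof.
case: D_suitable => _ card_D _ _; apply/eqP.
by rewrite eqEcard subsetT cardsT card_ord card_in_imset ?card_D ?leqnn //; exact: row_inj.
Qed.

Lemma sum_over_rows (F : nat -> nat) :
  (\sum_(e in D) Posz (F e.1.1))%R = Posz (\sum_(r < 6*k) F r).
Proof.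
rewrite -(big_morph Posz PoszD (erefl _)); congr Posz.
rewrite -(big_imset (fun r : 'I_(6*k) => F r) row_inj) rows_setT.
by apply: eq_bigl => r; rewrite in_setT.
Qed.

Lemma sum_Toff_suitable : (\sum_(e in D) Toff k e.1.1 e.1.2)%R = Posz (3*k).
Proof.
case: D_suitable => D_Tsq _ _.
have -> : (\sum_(e in D) Delta e = \sum_(e in D) Toff k e.1.1 e.1.2)%R.
  by apply: eq_bigr => e De; apply: Delta_Tsq; exact: subsetP D_Tsq e De.
rewrite (_ : (6*k)./2 = 3*k); last lia.
have ub : (\sum_(e in D) Toff k e.1.1 e.1.2 <= Posz (3*k))%R.
  rewrite -sum_max_off -sum_over_rows; apply: ler_sum => e _.
  by case/andP: (Toff_bounds e.1.1 e.1.2).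
have lb : (- Posz (3*k - 1) <= \sum_(e in D) Toff k e.1.1 e.1.2)%R.
  rewrite -sum_min_off -sum_over_rows -sumrN; apply: ler_sum => e _.
  by case/andP: (Toff_bounds e.1.1 e.1.2).
by move/eqP; apply: eqz_mod_near; lia.
Qed.

Lemma Toff_suitable_max e : e \in D -> Toff k e.1.1 e.1.2 = Posz (max_off e.1.1).
Proof.
have gap_ge0 f : f \in D -> (0 <= Posz (max_off f.1.1) - Toff k f.1.1 f.1.2)%R.
  by move=> _; case/andP: (Toff_bounds f.1.1 f.1.2) => _; rewrite subr_ge0.
have sum_gap : (\sum_(f in D) (Posz (max_off f.1.1) - Toff k f.1.1 f.1.2) = 0)%R.
  by rewrite sumrB sum_Toff_suitable sum_over_rows sum_max_off subrr.
by move=> De; apply/eqP; rewrite eq_sym -subr_eq0 (psumr_eq0P gap_ge0 sum_gap).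
Qed.

Lemma suitable_single_max_row a : a < 6*k -> single_max_row a ->
  has_entry D a (max_col a) (a + max_col a + max_off a).
Proof.
move=> lt_a single_a.
have /imsetP [e De /(congr1 val) /= row_e] : Ordinal lt_a \in [set e.1.1 | e in D].
  by rewrite rows_setT inE.
have Toff_e := Toff_suitable_max e De; rewrite -row_e in Toff_e.
have col_e : nat_of_ord e.1.2 = max_col a by apply: Toff_eq_max_off.
case: D_suitable => D_Tsq _ _ _; have := subsetP D_Tsq e De; rewrite inE => /eqP sym_e.
apply/existsP; exists e; rewrite De sym_e /Tval -row_e Toff_e -col_e -PoszD modz_nat absz_nat.
by rewrite (modn_small lt_a) (modn_small (ltn_ord e.1.2)) !eqxx.
Qed.

Lemma suitable_diagonal_entries :
  [/\ has_entry D 1 0 3, has_entry D 2 1 4 &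
      forall j, 1 <= j <= k - 2 -> has_entry D (3*j + 2) (6*k - 6*j) (6*k - 3*j + 3)].
Proof.
split.
- by apply: (suitable_single_max_row 1) => //; lia.
- by apply: (suitable_single_max_row 2) => //; lia.
move=> j /andP [j_ge1 j_le].
have max_col_j : max_col (3*j + 2) = 6*k - 6*j by rewrite /max_col; decide_ifs; lia.
have max_off_j : max_off (3*j + 2) = 1 by rewrite /max_off; decide_ifs.
have := suitable_single_max_row (3*j + 2); rewrite max_col_j max_off_j.
rewrite (_ : 3*j + 2 + (6*k - 6*j) + 1 = 6*k - 3*j + 3); last lia.
by apply; rewrite /single_max_row; lia.
Qed.

End SuitableDiagonal.
End SquareT.

Theorem lemma7 (k : nat) (hk : 2 <= k) :
  (exists X : {set entry k}, latin_transversal X) /\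
  (forall D : {set entry k}, suitable_diagonal D ->
     [/\ has_entry D 1 0 3, has_entry D 2 1 4 &
         forall j : nat, 1 <= j <= k - 2 ->
           has_entry D (3 * j + 2) (6 * k - 6 * j) (6 * k - 3 * j + 3)]).
Proof.
split; [exact: transversal_exists | exact: suitable_diagonal_entries].
Qed.
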